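(* Let $\mathcal{M}$ be a set of models, $c:\mathcal{M}\to(0,\infty)$ a cost function, $\mathcal{S}$ a step neighborhood function, $m_0$ a base model, and $\bm{\alpha}=(\alpha_1,\alpha_2,\dots)$ a sequence of real weights, as in the context. Let $\lambda>0$. Then $$\min_{m\in\mathcal{M}}\big(c(m)+\lambda\mathcal{L}_{\bm{\alpha}}(m)\big)=\min_{K\ge 0}\Big(\min_{\bm{m}\in\mathcal{P}_K} c(m_K)+\lambda\sum_{k=1}^K\alpha_k c(m_k)\Big),$$ and if $K^*\ge0$ and $\bm{m}^*=(m^*_1,\dots,m^*_{K^*})\in\mathcal{P}_{K^*}$ attain the minimum on the right-hand side, then the model $m^*_{K^*}$ is Pareto optimal with respect to the two objectives $c(\cdot)$ and $\mathcal{L}_{\bm{\alpha}}(\cdot)$ on $\mathcal{M}$ (i.e., there is no $m\in\mathcal{M}$ with $c(m)\le c(m^*_{K^*})$ and $\mathcal{L}_{\bm{\alpha}}(m)\le\mathcal{L}_{\bm{\alpha}}(m^*_{K^*})$ with at least one inequality strict).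
   Context: Setting: $\mathcal{M}$ is a set (of models), $c:\mathcal{M}\to(0,\infty)$ is a cost function, and $\mathcal{S}:\mathcal{M}\to 2^{\mathcal{M}}$ is a step neighborhood function with $\mathcal{S}(m)\neq\emptyset$ for all $m$. A fixed base model $m_0\in\mathcal{M}$ is given. An interpretable path of length $K\ge 0$ is a sequence $\bm{m}=(m_1,\dots,m_K)$ with $m_k\in\mathcal{S}(m_{k-1})$ for $1\le k\le K$; its final model is $m_K$ (which is $m_0$ when $K=0$). $\mathcal{P}_K$ is the set of paths of length $K$, $\mathcal{P}_K(m)=\{\bm{m}\in\mathcal{P}_K:m_K=m\}$, $\mathcal{P}(m)=\bigcup_{K\ge0}\mathcal{P}_K(m)$. For a weight sequence $\bm{\alpha}$, the path loss is $\mathcal{L}_{\bm{\alpha}}(\bm{m})=\sum_{k=1}^{|\bm{m}|}\alpha_k c(m_k)$ (empty sum $=0$), and the model loss is $\mathcal{L}_{\bm{\alpha}}(m)=\min_{\bm{m}\in\mathcal{P}(m)}\mathcal{L}_{\bm{\alpha}}(\bm{m})$ if $\mathcal{P}(m)\neq\emptyset$ and $\infty$ otherwise. *)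

From mathcomp Require Import all_boot all_order all_algebra.
From mathcomp Require Import all_classical all_reals.
From mathcomp Require Import ereal.
Set Implicit Arguments. Unset Strict Implicit. Unset Printing Implicit Defensive.
Import Order.TTheory GRing.Theory Num.Theory.
Local Open Scope classical_set_scope.
Local Open Scope ring_scope.

Section Paths.
Context {R : realType} {M : Type}.

Fixpoint is_path (S : M -> set M) (x : M) (s : seq M) : Prop :=
  match s with
  | [::] => True
  | y :: s' => S x y /\ is_path S y s'
  end.

Definition paths_K (S : M -> set M) (m0 : M) (K : nat) : set (seq M) :=
  [set s | size s = K /\ is_path S m0 s].

Definition final_model (m0 : M) (s : seq M) : M := last m0 s.

Definition paths_to (S : M -> set M) (m0 : M) (m : M) : set (seq M) :=
  [set s | is_path S m0 s /\ final_model m0 s = m].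

(* path loss  L_alpha(s) = sum_{k=1}^{|s|} alpha_k c(m_k); alpha k = alpha_k *)
Definition path_loss (c : M -> R) (alpha : nat -> R) (m0 : M) (s : seq M) : R :=
  \sum_(k < size s) alpha k.+1 * c (nth m0 s k).

(* model loss L_alpha(m): the minimum (taken as infimum in \bar R) of the path
   loss over P(m); this is +oo when P(m) is empty. *)
Definition model_loss (S : M -> set M) (c : M -> R) (alpha : nat -> R) (m0 : M)
  (m : M) : \bar R :=
  ereal_inf [set (path_loss c alpha m0 s)%:E | s in paths_to S m0 m].

End Paths.

(** Both optimal values are the infimum of the scalarized objective
  c(m_K) + lambda L_alpha(m_1, ..., m_K) over all interpretable paths: the
  right-hand side groups the paths by length, the left-hand side by final
  model, since x |-> c(m) + lambda x commutes with infima when lambda > 0.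
  Hence the final model of an optimal path minimizes c + lambda L_alpha over
  all models, with finite loss, and such a minimizer of a positively weighted
  sum of the two objectives cannot be dominated. *)

From mathcomp Require Import all_boot all_order all_algebra.
From mathcomp Require Import all_classical all_reals.
From mathcomp Require Import ereal.
From mathcomp Require Import lra.
Import Order.TTheory GRing.Theory Num.Theory.
Local Open Scope classical_set_scope.
Local Open Scope ring_scope.

Section ereal_inf_facts.
Context {R : realType}.
Local Open Scope ereal_scope.

Lemma ereal_inf_EFinDl (r : R) (X : set (\bar R)) :
  ereal_inf [set r%:E + x | x in X] = r%:E + ereal_inf X.
Proof.
have le_shift (r' : R) X' : r'%:E + ereal_inf X' <= ereal_inf [set r'%:E + x | x in X'].
  apply: le_ereal_inf_tmp => _ [x Xx <-]; apply: leeD2l.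
  exact: ereal_inf_lbound Xx.
apply/le_anti; rewrite le_shift andbT.
have shift_back : [set (- r)%:E + y | y in [set r%:E + x | x in X]] = X.
  rewrite image_comp -[RHS]image_id; apply: eq_imagel => x _ /=.
  by rewrite addeA -EFinD addNr add0e.
have := le_shift (- r)%R [set r%:E + x | x in X].
rewrite shift_back => /(leeD2l r%:E).
by rewrite addeA -EFinD subrr add0e.
Qed.

Lemma ereal_inf_bigcup (I : Type) (P : set I) (F : I -> set (\bar R)) :
  ereal_inf [set ereal_inf (F i) | i in P] = ereal_inf (\bigcup_(i in P) F i).
Proof.
apply/le_anti/andP; split.
  apply: le_ereal_inf_tmp => y [i Pi Fiy].
  apply: ge_ereal_inf; exists (ereal_inf (F i)); first by exists i.
  exact: ereal_inf_lbound Fiy.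
apply: le_ereal_inf_tmp => _ [i Pi <-]; apply: ereal_inf_le_tmp.
exact: bigcup_sup.
Qed.

End ereal_inf_facts.

Lemma pareto_of_scalarized_min {R : realType} (T : Type)
    (f : T -> R) (g : T -> \bar R) (lambda : R) (x : T) :
  0 < lambda -> g x \is a fin_num ->
  (forall y, ((f x)%:E + lambda%:E * g x <= (f y)%:E + lambda%:E * g y)%E) ->
  ~ exists y, f y <= f x /\ (g y <= g x)%E /\ (f y < f x \/ (g y < g x)%E).
Proof.
move=> lam_gt0 gx_fin xmin [y [fyx [gyx fg_lt]]].
have := xmin y; rewrite -(fineK gx_fin) in gyx fg_lt *.
move: (fine (g x)) gyx fg_lt => a.
case: (g y) => [b| |] //=; last first.
  by move=> _ _; rewrite gt0_muleNy ?lte_fin // addeNy leeNy_eq.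
rewrite lee_fin => ba; rewrite lte_fin -EFinM -EFinM -!EFinD lee_fin => fg_lt; nra.
Qed.

Section scalarized_paths.
Context {R : realType} {M : Type} (S : M -> set M) (m0 : M).
Variables (c : M -> R) (alpha : nat -> R) (lambda : R).
Hypothesis lam_gt0 : 0 < lambda.
Local Open Scope ereal_scope.

Definition path_objective (s : seq M) : \bar R :=
  (c (final_model m0 s))%:E + (lambda * path_loss c alpha m0 s)%:E.

Lemma bigcup_paths_K : \bigcup_(K in [set: nat]) paths_K S m0 K = is_path S m0.
Proof.
apply/seteqP; split => [s [K _ [_ //]] | s ps].
by exists (size s).
Qed.

Lemma bigcup_paths_to : \bigcup_(m in [set: M]) paths_to S m0 m = is_path S m0.
Proof.
apply/seteqP; split => [s [m _ [//]] | s ps].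
by exists (final_model m0 s).
Qed.

Lemma model_loss_le_path_loss s : is_path S m0 s ->
  model_loss S c alpha m0 (final_model m0 s) <= (path_loss c alpha m0 s)%:E.
Proof. by move=> ps; apply: ereal_inf_lbound; exists s. Qed.

Lemma scalarized_model_loss m :
  (c m)%:E + lambda%:E * model_loss S c alpha m0 m
  = ereal_inf [set path_objective s | s in paths_to S m0 m].
Proof.
rewrite -ereal_inf_pZl // -ereal_inf_EFinDl !image_comp.
congr ereal_inf; apply: eq_imagel => s [_ <-] /=.
by rewrite /path_objective EFinM.
Qed.

Lemma ereal_inf_paths_K :
  ereal_inf [set ereal_inf [set path_objective s | s in paths_K S m0 K]
            | K in [set: nat]]
  = ereal_inf [set path_objective s | s in is_path S m0].
Proof. by rewrite ereal_inf_bigcup -image_bigcup bigcup_paths_K. Qed.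

Lemma ereal_inf_scalarized_model_loss :
  ereal_inf [set (c m)%:E + lambda%:E * model_loss S c alpha m0 m | m in [set: M]]
  = ereal_inf [set path_objective s | s in is_path S m0].
Proof.
under eq_imagel do rewrite scalarized_model_loss.
by rewrite ereal_inf_bigcup -image_bigcup bigcup_paths_to.
Qed.

End scalarized_paths.

Theorem proposition1 (R : realType) (M : Type) (c : M -> R) (S : M -> set M)
  (m0 : M) (alpha : nat -> R) (lambda : R)
  (hc : forall m, 0 < c m)
  (hS : forall m, S m !=set0)
  (hlam : 0 < lambda) :
  (* equality of the two optimal values (minima, taken as infima in \bar R) *)
  ereal_inf [set ((c m)%:E + lambda%:E * model_loss S c alpha m0 m)%E | m in [set: M]]
  = ereal_inf [set ereal_inf [set ((c (final_model m0 s))%:E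
                                   + (lambda * path_loss c alpha m0 s)%:E)%E
                              | s in paths_K S m0 K] | K in [set: nat]]
  /\
  (* any minimizer of the right-hand side yields a Pareto optimal final model *)
  (forall (Kstar : nat) (sstar : seq M),
     paths_K S m0 Kstar sstar ->
     ((c (final_model m0 sstar))%:E + (lambda * path_loss c alpha m0 sstar)%:E)%E
       = ereal_inf [set ereal_inf [set ((c (final_model m0 s))%:E
                                        + (lambda * path_loss c alpha m0 s)%:E)%E
                                   | s in paths_K S m0 K] | K in [set: nat]] ->
     ~ (exists m : M,
          c m <= c (final_model m0 sstar) /\
          (model_loss S c alpha m0 m <= model_loss S c alpha m0 (final_model m0 sstar))%E /\
          (c m < c (final_model m0 sstar) \/
           (model_loss S c alpha m0 m < model_loss S c alpha m0 (final_model m0 sstar))%E))).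
Proof.
have values_eq := etrans (ereal_inf_scalarized_model_loss S m0 c alpha lambda hlam)
  (esym (ereal_inf_paths_K S m0 c alpha lambda)).
split=> // _ s [_ ps] s_opt.
set x := final_model m0 s; set ML := model_loss S c alpha m0.
have le_opt y : ((c y)%:E + lambda%:E * ML y >= path_objective m0 c alpha lambda s)%E.
  by rewrite [X in (X <= _)%E]s_opt -values_eq; apply: ereal_inf_lbound; exists y.
have x_le : ((c x)%:E + lambda%:E * ML x <= path_objective m0 c alpha lambda s)%E.
  by rewrite /path_objective EFinM leeD2l // lee_pmul2l ?lte_fin //;
    exact: model_loss_le_path_loss.
have x_fin : ML x \is a fin_num.
  rewrite fin_numElt (le_lt_trans (model_loss_le_path_loss _ _ _ _ _ ps)) ?ltry //.
  rewrite andbT ltNye; apply: contraPneq (le_opt x) => ->.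
  by rewrite gt0_muleNy ?lte_fin // addeNy leeNy_eq /path_objective -EFinD.
apply: (@pareto_of_scalarized_min R M c ML lambda x hlam x_fin) => y.
exact: le_trans x_le (le_opt y).
Qed.
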